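(* Let $\mathcal{G}$ be a non-trivial hereditary graph class. Then there exists a graph $Z$ such that (1) $Z$ is a block-graph, (2) $Z\notin\mathcal{B}(\mathcal{G})$, and (3) for every $v\in V(Z)$, $Z\setminus v\in\mathcal{B}(\mathcal{G})$.
   Context: All graphs are finite, simple and undirected. A graph is biconnected if every two of its vertices lie on a common cycle. A block of $G$ is an isolated vertex, a bridge (an edge whose removal increases the number of components, with its endpoints), or a maximal biconnected subgraph; $G$ is a block-graph if its only block is $G$ itself. A class is hereditary if closed under induced subgraphs, and non-trivial if it contains at least one non-empty graph and is not the class of all graphs. $\mathcal{B}(\mathcal{G})$ is the class of graphs all of whose blocks belong to $\mathcal{G}$. *)

From mathcomp Require Import all_boot.
Set Implicit Arguments. Unset Strict Implicit. Unset Printing Implicit Defensive.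

Record graph := Graph {
  vert :> finType;
  adj : rel vert;
  adj_sym : symmetric adj;
  adj_irr : irreflexive adj }.

Section Induced.
Variables (G : graph) (S : {set vert G}).
Definition ind_vert : finType := {x : vert G | x \in S}.
Definition ind_adj : rel ind_vert := fun x y => adj (val x) (val y).
Lemma ind_adj_sym : symmetric ind_adj.
Proof. by move=> x y; rewrite /ind_adj adj_sym. Qed.
Lemma ind_adj_irr : irreflexive ind_adj.
Proof. by move=> x; rewrite /ind_adj adj_irr. Qed.
Definition induced : graph := Graph ind_adj_sym ind_adj_irr.
End Induced.
Arguments induced : clear implicits.

Definition isomorphic (G H : graph) : Prop :=
  exists f : vert G -> vert H, bijective f /\ forall x y, adj (f x) (f y) = adj x y.

Definition graph_class := graph -> Prop.

Definition hereditary (C : graph_class) : Prop :=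
  forall (G H : graph) (S : {set vert G}), C G -> isomorphic H (induced G S) -> C H.

Definition nontrivial (C : graph_class) : Prop :=
  (exists G : graph, C G /\ 0 < #|vert G|) /\ (exists G : graph, ~ C G).

Definition ncomp (T : finType) (e : rel T) : nat := n_comp (connect e) T.

Definition del_edge (G : graph) (u v : vert G) : rel (vert G) :=
  fun x y => adj x y && ~~ (((x == u) && (y == v)) || ((x == v) && (y == u))).

Definition isolated (G : graph) (v : vert G) : Prop := forall w, ~~ adj v w.

Definition bridge (G : graph) (u v : vert G) : Prop :=
  adj u v /\ ncomp (adj (g:=G)) < ncomp (del_edge u v).

Definition cycle_in (G : graph) (S : {set vert G}) (c : seq (vert G)) : bool :=
  [&& cycle (adj (g:=G)) c, uniq c, 3 <= size c & all (fun x => x \in S) c].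

Definition biconnected (G : graph) (S : {set vert G}) : Prop :=
  forall u v, u \in S -> v \in S -> u != v ->
    exists c, cycle_in S c /\ u \in c /\ v \in c.

Definition is_block (G : graph) (S : {set vert G}) : Prop :=
  (exists v, S = [set v] /\ isolated v) \/
  (exists u v, S = [set u; v] /\ bridge u v) \/
  (3 <= #|S| /\ biconnected S /\
     forall S' : {set vert G}, S \proper S' -> ~ biconnected S').

Definition block_graph (G : graph) : Prop :=
  forall S : {set vert G}, is_block S <-> S = setT.

Definition blocks_in (C : graph_class) (G : graph) : Prop :=
  forall S : {set vert G}, is_block S -> C (induced G S).

Definition del_vertex (G : graph) (v : vert G) : graph := induced G [set~ v].

From mathcomp Require Import all_boot.
From Stdlib Require Import Classical.

Set Implicit Arguments. Unset Strict Implicit. Unset Printing Implicit Defensive.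

(** Since the class is hereditary and not every graph belongs to it, some
    graph H lies outside it, and so does the join of H with a triangle; this
    join is biconnected, hence a block-graph. Choose a block-graph Z outside
    the class with as few vertices as possible. Its only block is Z itself, so
    Z is not in B(class). Every block of Z - v induces a block-graph on fewer
    vertices, which by minimality lies in the class. *)

Lemma isomorphic_trans (G H K : graph) :
  isomorphic G H -> isomorphic H K -> isomorphic G K.
Proof.
move=> [f [bij_f adj_f]] [g [bij_g adj_g]]; exists (g \o f).
by split=> [|x y /=]; [exact: bij_comp | rewrite adj_g adj_f].
Qed.

Lemma isomorphic_induced_setT (G : graph) : isomorphic G (induced G setT).
Proof.
exists (fun x => Sub x (in_setT x) : induced G setT); split=> // .
by exists val => [x|x]; [rewrite SubK | apply: val_inj; rewrite SubK].
Qed.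

Lemma hereditary_isomorphic (C : graph_class) (G H : graph) :
  hereditary C -> C G -> isomorphic H G -> C H.
Proof.
move=> hC CG isoHG.
exact: hC CG (isomorphic_trans isoHG (isomorphic_induced_setT G)).
Qed.

Lemma connect_connect (T : finType) (e : rel T) : connect (connect e) =2 connect e.
Proof. by move=> x y; apply/idP/idP; [apply: connect_sub | apply: connect1]. Qed.

Lemma ncomp_pair (T : finType) (e : rel T) (u v : T) :
  connect_sym e -> (forall x, (x == u) || (x == v)) ->
  ncomp e = (~~ connect e u v).+1.
Proof.
move=> sym_e uv_cover.
have sym_ce : connect_sym (connect e) by move=> x y; rewrite !connect_connect sym_e.
rewrite /ncomp -connect_connect -(n_comp_closure2 sym_ce).
by apply: eq_n_comp_r => x; apply/esym/mem_closure; rewrite !inE uv_cover.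
Qed.

Section EdgeDeletion.
Variable G : graph.
Implicit Types u v a : G.

Lemma del_edgeC u v : del_edge u v =2 del_edge v u.
Proof. by move=> x y; rewrite /del_edge orbC. Qed.

Lemma del_edge_sym u v : symmetric (del_edge u v).
Proof.
by move=> x y; rewrite /del_edge adj_sym orbC [(y == _) && _]andbC [(y == v) && _]andbC.
Qed.

(* Past its first edge [u a] the path never returns to [u], so it cannot use [uv]. *)
Lemma path_del_edge u v a p :
  path (@adj G) u (a :: p) -> uniq [:: u, a & p] -> a != v ->
  path (del_edge u v) u (a :: p).
Proof.
rewrite /= inE negb_or => /andP[ua pa] /andP[/andP[u_neq_a u_notin_p] _] a_neq_v.
rewrite {1}/del_edge ua eqxx (negbTE a_neq_v) (eq_sym a) (negbTE u_neq_a) !andbF /=.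
apply: (@sub_in_path _ (predC1 u)) pa => [x y|].
  by rewrite !inE /del_edge => xu yu ->; rewrite (negbTE xu) (negbTE yu) !andbF.
by rewrite /= eq_sym u_neq_a; apply/allP => x /=; apply: contraTneq => ->.
Qed.

Lemma connect_del_edge_arc u v p q :
  cycle (@adj G) (u :: p ++ v :: q) -> uniq (u :: p ++ v :: q) -> p != [::] ->
  connect (del_edge u v) u v.
Proof.
move=> cyc uniq_c p_nil.
have arc_prefix : prefix (rcons p v) (p ++ v :: q).
  by apply/prefixP; exists q; rewrite -cats1 -catA.
have arc_path : path (@adj G) u (rcons p v).
  exact: prefix_path (prefix_trans arc_prefix (prefix_rcons _ u)) cyc.
have arc_uniq : uniq (u :: rcons p v).
  by apply: prefix_uniq uniq_c; rewrite prefix_cons eqxx.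
case: p p_nil arc_path arc_uniq {arc_prefix cyc uniq_c} => // a p _ arc_path arc_uniq.
apply/connectP; exists (rcons (a :: p) v); last by rewrite last_rcons.
apply: path_del_edge => //.
by move: arc_uniq; rewrite /= mem_rcons inE negb_or => /and3P[_ /andP[]].
Qed.

Lemma connect_del_edge_cycle c u v :
  cycle (@adj G) c -> uniq c -> 3 <= size c -> u \in c -> v \in c -> u != v ->
  connect (del_edge u v) u v.
Proof.
move=> cyc uniq_c size_c u_in_c v_in_c u_neq_v.
case: (rot_to_arc uniq_c u_in_c v_in_c u_neq_v) => i p q _ _ rot_c.
have cyc' : cycle (@adj G) (u :: p ++ v :: q) by rewrite -rot_c rot_cycle.
have uniq' : uniq (u :: p ++ v :: q) by rewrite -rot_c rot_uniq.
have [p_nil | p_cons] := eqVneq p [::]; last exact: connect_del_edge_arc cyc' uniq' p_cons.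
have q_cons : q != [::].
  by apply: contraTneq size_c => q_nil; rewrite -(size_rot i) rot_c p_nil q_nil.
have rot_vu : rot (size (u :: p)) (u :: p ++ v :: q) = v :: q ++ u :: p.
  by rewrite -cat_cons rot_size_cat.
rewrite (eq_connect (del_edgeC u v)) (sym_connect_sym (del_edge_sym v u)).
by apply: (connect_del_edge_arc (q := p)) q_cons; rewrite -rot_vu ?rot_cycle ?rot_uniq.
Qed.

Lemma ncomp_del_edge u v :
  connect (del_edge u v) u v -> ncomp (@adj G) = ncomp (del_edge u v).
Proof.
move=> conn_uv; apply/eq_n_comp/eq_connect => x y.
apply/idP/idP; apply: connect_sub => {}x {}y xy; last by apply: connect1; case/andP: xy.
have [/orP[]/andP[/eqP-> /eqP->] // | not_uv] :=
  boolP (((x == u) && (y == v)) || ((x == v) && (y == u))).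
  by rewrite (sym_connect_sym (del_edge_sym u v)).
by apply: connect1; rewrite /del_edge xy not_uv.
Qed.

Lemma biconnected_no_bridge u v : biconnected [set: G] -> ~ bridge u v.
Proof.
move=> bic [uv]; have u_neq_v : u != v by apply: contraTneq uv => ->; rewrite adj_irr.
have [c [/and4P[cyc uniq_c size_c _] [u_in_c v_in_c]]] :=
  bic u v (in_setT u) (in_setT v) u_neq_v.
have := connect_del_edge_cycle cyc uniq_c size_c u_in_c v_in_c u_neq_v.
by move/ncomp_del_edge->; rewrite ltnn.
Qed.
End EdgeDeletion.

Lemma block_graph_card1 (G : graph) : #|G| = 1 -> block_graph G.
Proof.
move=> card_G; have /card_gt0P[x0 _] : 0 < #|G| by rewrite card_G.
have all_x0 (x : G) : x = x0 by apply/fintype_le1P; rewrite card_G.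
have setT_x0 : [set: G] = [set x0] by apply/setP => x; rewrite !inE (all_x0 x) eqxx.
move=> S; split=> [[[x [-> _]] | [[u [v [_ [uv _]]]] | [size_S _]]] | ->].
- by rewrite setT_x0 (all_x0 x).
- by rewrite (all_x0 u) (all_x0 v) adj_irr in uv.
- by have := leq_trans size_S (max_card S); rewrite card_G.
- by left; exists x0; split=> // x; rewrite (all_x0 x) adj_irr.
Qed.

Lemma block_graph_K2 (G : graph) (u v : G) : #|G| = 2 -> adj u v -> block_graph G.
Proof.
move=> card_G uv; have u_neq_v : u != v by apply: contraTneq uv => ->; rewrite adj_irr.
have pair_setT (x y : G) : x != y -> [set x; y] = setT.
  by move=> x_neq_y; apply/eqP; rewrite eqEcard subsetT cardsT cards2 x_neq_y card_G.
have uv_cover (x : G) : (x == u) || (x == v).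
  have : x \in [set u; v] by rewrite pair_setT ?inE.
  by rewrite !inE.
have no_del_edge (x y : G) : ~~ del_edge u v x y.
  rewrite /del_edge negb_and negbK.
  by case/orP: (uv_cover x) => /eqP->; case/orP: (uv_cover y) => /eqP->;
    rewrite ?adj_irr ?eqxx /= ?orbT.
have bridge_uv : bridge u v.
  split=> //; rewrite (ncomp_pair (sym_connect_sym (@adj_sym G)) uv_cover) connect1 //.
  rewrite (ncomp_pair (sym_connect_sym (del_edge_sym u v)) uv_cover) ltnS lt0b.
  apply/connectP => -[[_ v_eq_u | x p /andP[del_ux _]] /=].
    by rewrite v_eq_u eqxx in u_neq_v.
  by rewrite (negbTE (no_del_edge u x)) in del_ux.
move=> S; split=> [[[x [-> x_isolated]] | [[x [y [-> [xy _]]]] | [size_S _]]] | ->].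
- by case/orP: (uv_cover x) => /eqP x_eq; [move: (x_isolated v) | move: (x_isolated u)];
    rewrite x_eq ?uv // adj_sym uv.
- by apply: pair_setT; apply: contraTneq xy => ->; rewrite adj_irr.
- by have := leq_trans size_S (max_card S); rewrite card_G.
- by right; left; exists u, v; rewrite pair_setT.
Qed.

Lemma block_graph_biconnected (G : graph) :
  3 <= #|G| -> biconnected [set: G] -> block_graph G.
Proof.
move=> size_G bic.
have not_isolated (w : G) : ~ isolated w.
  have /card_gt0P[x] : 0 < #|[set~ w]|.
    by rewrite cardsC1 -subn1 subn_gt0 (leq_trans _ size_G).
  rewrite !inE eq_sym => w_neq_x w_isolated.
  have [c [/and4P[cyc _ _ _] [w_in_c _]]] := bic w x (in_setT w) (in_setT x) w_neq_x.
  by have := w_isolated (next c w); rewrite (next_cycle cyc w_in_c).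
move=> S; split=> [[[w [_ /not_isolated]] | [[u [v [_ /biconnected_no_bridge]]] | ]] | ->].
- by [].
- by move/(_ bic).
- case=> _ [_ S_maximal]; apply/eqP/negPn/negP => S_neq_setT.
  by apply: (S_maximal setT _ bic); rewrite properT.
- right; right; rewrite cardsT; split=> //; split=> // S' /properP[_ [x _]].
  by rewrite inE.
Qed.

Lemma card_induced (G : graph) (S : {set G}) : #|induced G S| = #|S|.
Proof. by rewrite card_sig; apply: eq_card => x; rewrite !inE. Qed.

Lemma biconnected_induced (G : graph) (S : {set G}) :
  biconnected S -> biconnected [set: induced G S].
Proof.
move=> bic u w _ _ u_neq_w.
have val_neq : val u != val w by rewrite (inj_eq val_inj).
have [c [/and4P[cyc uniq_c size_c c_in_S] [u_in_c w_in_c]]] :=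
  bic _ _ (valP u) (valP w) val_neq.
pose c' : seq (induced G S) := pmap insub c.
have val_c' : map val c' = c.
  by rewrite (pmap_filter (insubK _)) (eq_filter (isSome_insub _)); apply/all_filterP.
exists c'; split; last by rewrite !mem_pmap_sub.
apply/and4P; split; last by apply/allP => x _; apply: in_setT.
- by rewrite -val_c' cycle_map in cyc.
- exact: pmap_sub_uniq.
- by rewrite -(size_map val) val_c'.
Qed.

Lemma block_graph_induced_block (G : graph) (S : {set G}) :
  is_block S -> block_graph (induced G S).
Proof.
case=> [[v [-> _]] | [[u [v [-> [uv _]]]] | [size_S [bic _]]]].
- by apply: block_graph_card1; rewrite card_induced cards1.
- have u_neq_v : u != v by apply: contraTneq uv => ->; rewrite adj_irr.
  have u_in : u \in [set u; v] by rewrite !inE eqxx.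
  have v_in : v \in [set u; v] by rewrite !inE eqxx orbT.
  apply: (@block_graph_K2 _ (Sub u u_in : induced G _) (Sub v v_in)) => //.
  by rewrite card_induced cards2 u_neq_v.
- by apply: block_graph_biconnected; [rewrite card_induced | exact: biconnected_induced].
Qed.

Section JoinTriangle.
Variable H : graph.

Definition joinK3_adj (x y : H + 'I_3) : bool :=
  match x, y with
  | inl a, inl b => adj a b
  | inr i, inr j => i != j
  | _, _ => true
  end.

Lemma joinK3_adj_sym : symmetric joinK3_adj.
Proof.
by case=> [a|i] [b|j] //=; [apply: adj_sym | rewrite eq_sym].
Qed.

Lemma joinK3_adj_irr : irreflexive joinK3_adj.
Proof. by case=> [a|i] /=; rewrite ?adj_irr ?eqxx. Qed.

Definition joinK3 : graph := Graph joinK3_adj_sym joinK3_adj_irr.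

Lemma card_joinK3 : 3 <= #|joinK3|.
Proof. by rewrite card_sum card_ord leq_addl. Qed.

Lemma isomorphic_induced_joinK3 : isomorphic H (induced joinK3 (inl @: [set: H])).
Proof.
have inl_in (a : H) : (inl a : joinK3) \in inl @: [set: H] by apply: imset_f.
exists (fun a => Sub (inl a : joinK3) (inl_in a) : induced joinK3 _); split=> //.
apply: inj_card_bij => [a b /(congr1 val)[] //|].
by rewrite card_induced card_imset ?cardsT // => a b [].
Qed.

Lemma joinK3_biconnected : biconnected [set: joinK3].
Proof.
have in_setT_all (c : seq joinK3) : all (fun x => x \in [set: joinK3]) c.
  by apply/allP => x _; apply: in_setT.
pose o0 := @Ordinal 3 0 isT; pose o1 := @Ordinal 3 1 isT; pose o2 := @Ordinal 3 2 isT.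
have other (i : 'I_3) : exists j, i != j.
  by case: (eqVneq i o0) => [->|]; [exists o1 | exists o0].
have triangle (a : H) (i j : 'I_3) :
    i != j -> cycle_in [set: joinK3] [:: inl a; inr i; inr j].
  by move=> i_neq_j; rewrite /cycle_in in_setT_all /= !inE /= i_neq_j.
move=> [a|i] [b|j] _ _ x_neq_y.
- exists [:: inl a; inr o0; inl b; inr o1].
  by rewrite /cycle_in in_setT_all /= !inE /= (negbTE x_neq_y) !eqxx ?orbT.
- have [k j_neq_k] := other j.
  by exists [:: inl a; inr j; inr k]; rewrite triangle // !inE !eqxx ?orbT.
- have [k i_neq_k] := other i.
  by exists [:: inl b; inr i; inr k]; rewrite triangle // !inE !eqxx ?orbT.
- exists [:: inr o0; inr o1; inr o2]; rewrite /cycle_in in_setT_all.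
  by case: i j x_neq_y => [[|[|[|//]]] ?] [[|[|[|//]]] ?].
Qed.
End JoinTriangle.

Lemma minimal_block_graph_notin (C : graph_class) (G : graph) :
  block_graph G -> ~ C G ->
  exists Z : graph, [/\ block_graph Z, ~ C Z & forall v : Z, blocks_in C (del_vertex v)].
Proof.
have [n] := ubnP #|G|; elim: n G => // n IH G /ltnSE size_G block_G notin_G.
case: (classic (forall v : G, blocks_in C (del_vertex v))) => [minimal | ]; first by exists G.
move=> /not_all_ex_not[v]; rewrite {1}/blocks_in.
move=> /not_all_ex_not[S] /(@imply_to_and (is_block S))[block_S notin_S].
apply: IH notin_S; last exact: block_graph_induced_block.
rewrite card_induced; apply: leq_ltn_trans (max_card S) _.
rewrite card_induced cardsC1; apply: leq_trans size_G.
by rewrite ltn_predL; apply/card_gt0P; exists v.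
Qed.

Theorem lemma3 (C : graph_class) :
  hereditary C -> nontrivial C ->
  exists Z : graph,
    block_graph Z /\ ~ blocks_in C Z /\
    (forall v : vert Z, blocks_in C (del_vertex v)).
Proof.
move=> hered_C [_ [H notin_H]].
have notin_J : ~ C (joinK3 H).
  by move=> in_J; apply: notin_H; apply: hered_C in_J (isomorphic_induced_joinK3 H).
have block_J := block_graph_biconnected (@card_joinK3 H) (@joinK3_biconnected H).
have [Z [block_Z notin_Z minimal_Z]] := minimal_block_graph_notin block_J notin_J.
exists Z; split=> //; split=> // blocks_Z; apply: notin_Z.
apply: hereditary_isomorphic hered_C (blocks_Z setT _) (isomorphic_induced_setT Z).
exact/(block_Z setT).
Qed.
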